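(* Let $f:\mathbb{R}^n\to\mathbb{R}\cup\{+\infty\}$ be closed and convex, let $X\in\mathbb{R}^{n\times m}$ have rank $r$ with compact SVD $X=U_r\Sigma_r V_r^\top$, let $\gamma>0$, $k\ge0$. For an integer $q\ge0$ define $$p^*_{\rm con}(q)=\min_{w\in\mathbb{R}^m}\ f(Xw)\quad\text{s.t.}\quad \|w\|_0\le q,\ \|w\|_2^2\le\gamma,$$ $$p^{**}_{\rm con}(k)=\min_{v\in\mathbb{R}^m,\ u\in[0,1]^m}\ f(XD(u)v)\quad\text{s.t.}\quad \mathbf 1^\top u\le k,\ v^\top D(u)v\le\gamma .$$ Let $(v^*,u^* )$ be an optimal solution of the latter with optimal value $t^*$, let $z^*=\Sigma_rV_r^\top D(u^* )v^*$, let $\ell_i$ be the $i$-th column of $\Sigma_rV_r^\top$, let $c\sim\mathcal N(0,I_m)$, and consider the linear program in $u\in\mathbb{R}^m$: $$\min\ c^\top u\quad\text{s.t.}\quad \sum_{i=1}^m u_i\le k,\quad \sum_{i=1}^m u_i(v_i^* )^2\le\gamma,\quad \sum_{i=1}^m u_i\ell_iv_i^*=z^*,\quad u\in[0,1]^m.$$ Then, with probability one, from an optimal basic feasible solution $\bar u$ of this linear program one can construct the point $w=D(\bar u)v^*$ (with $S=\{i:\bar u_i\notin\{0,1\}\}$, $\tilde u_i=1,\tilde v_i=\bar u_iv_i^*$ for $i\in S$, $\tilde u_i=\bar u_i,\tilde v_i=v_i^*$ otherwise, $w=D(\tilde u)\tilde v$), whose objective value $\mathrm{OPT}=f(Xw)$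 satisfies $$p^*_{\rm con}(k+r+2)-\rho(f)\le\mathrm{OPT}\le p^{**}_{\rm con}(k)\le p^*_{\rm con}(k),$$ where $\rho(f)=\sup_{w}\big(f(Xw)-f^{**}(Xw)\big)\ge0$.
   Context: $\|w\|_0$ is the number of nonzero entries of $w$; $D(u)=\mathrm{diag}(u_1,\dots,u_m)$; $\mathbf 1$ is the all-ones vector. $f^*(y)=\sup_x x^\top y-f(x)$ is the convex conjugate and $f^{**}$ the biconjugate (convex envelope) of $f$; for closed convex $f$, $f^{**}=f$. *)

From HB Require Import structures.
From mathcomp Require Import all_boot all_order all_algebra.
From mathcomp Require Import all_classical all_reals ereal topology normedtype sequences.
Set Implicit Arguments. Unset Strict Implicit. Unset Printing Implicit Defensive.
Import Order.TTheory GRing.Theory Num.Theory numFieldNormedType.Exports.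
Local Open Scope ring_scope.
Local Open Scope classical_set_scope.

Section Defs.
Variable R : realType.

Definition Dg (m : nat) (u : 'cV[R]_m) : 'M[R]_m := diag_mx u^T.

Definition l0 (m : nat) (w : 'cV[R]_m) : nat := #|[set i : 'I_m | w i 0 != 0]|.

Definition ip (n : nat) (x y : 'cV[R]_n) : R := (x^T *m y) 0 0.

(* convexity of an extended-real-valued function: convex epigraph *)
Definition ext_convex (n : nat) (f : 'cV[R]_n -> \bar R) : Prop :=
  forall (x y : 'cV[R]_n) (a b l : R), 0 <= l <= 1 ->
    (f x <= a%:E)%E -> (f y <= b%:E)%E ->
    (f (l *: x + (1 - l) *: y)%R <= (l * a + (1 - l) * b)%R%:E)%E.

(* closedness: the epigraph is (sequentially) closed in R^n x R *)
Definition ext_closed (n : nat) (f : 'cV[R]_n -> \bar R) : Prop :=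
  forall (xs : nat -> 'cV[R]_n) (as_ : nat -> R) (x : 'cV[R]_n) (a : R),
    (forall k, (f (xs k) <= (as_ k)%:E)%E) ->
    (forall i, (fun k => xs k i 0) @ \oo --> x i 0) ->
    as_ @ \oo --> a ->
    (f x <= a%:E)%E.

Definition fconj (n : nat) (f : 'cV[R]_n -> \bar R) (y : 'cV[R]_n) : \bar R :=
  ereal_sup [set ((ip x y)%:E - f x)%E | x in [set: 'cV[R]_n]].

Definition fbiconj (n : nat) (f : 'cV[R]_n -> \bar R) (x : 'cV[R]_n) : \bar R :=
  fconj (fconj f) x.

Definition rho (n m : nat) (f : 'cV[R]_n -> \bar R) (X : 'M[R]_(n, m)) : \bar R :=
  ereal_sup [set (f (X *m w)%R - fbiconj f (X *m w)%R)%E | w in [set: 'cV[R]_m]].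

Definition pcon (n m : nat) (f : 'cV[R]_n -> \bar R) (X : 'M[R]_(n, m))
  (gamma : R) (q : nat) : \bar R :=
  ereal_inf [set f (X *m w) | w in [set w : 'cV[R]_m | (l0 w <= q)%N /\ ip w w <= gamma]].

Definition relax_feas (m : nat) (gamma : R) (k : nat) (v u : 'cV[R]_m) : Prop :=
  (forall i, 0 <= u i 0 <= 1) /\ \sum_i u i 0 <= k%:R /\ ip v (Dg u *m v) <= gamma.

Definition pcon2 (n m : nat) (f : 'cV[R]_n -> \bar R) (X : 'M[R]_(n, m))
  (gamma : R) (k : nat) : \bar R :=
  ereal_inf [set f (X *m (Dg vu.2 *m vu.1)) | vu in [set vu : 'cV[R]_m * 'cV[R]_m |
                                               relax_feas gamma k vu.1 vu.2]].

Definition poly_feas (p q m : nat) (Aineq : 'M[R]_(p, m)) (bineq : 'cV[R]_p)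
  (Aeq : 'M[R]_(q, m)) (beq : 'cV[R]_q) (u : 'cV[R]_m) : Prop :=
  (forall j, (Aineq *m u) j 0 <= bineq j 0) /\ Aeq *m u = beq.

(* Basic feasible solution: feasible and the active constraints (all equalities
   and the tight inequalities) contain m linearly independent rows *)
Definition is_bfs (p q m : nat) (Aineq : 'M[R]_(p, m)) (bineq : 'cV[R]_p)
  (Aeq : 'M[R]_(q, m)) (beq : 'cV[R]_q) (u : 'cV[R]_m) : Prop :=
  poly_feas Aineq bineq Aeq beq u /\
  \rank (col_mx (\matrix_(j < p, i < m)
                   (if (Aineq *m u) j 0 == bineq j 0 then Aineq j i else 0))
                Aeq) = m.

(* LP data of Corollary 4.1.  Inequalities: 1^T u <= k; sum u_i (v_i)^2 <= gamma;
   -u_i <= 0; u_i <= 1.  Equalities: sum_i u_i l_i v_i = z, where l_i is the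
   i-th column of L (= Sigma_r V_r^T). *)
Definition lp_Aineq (m : nat) (v : 'cV[R]_m) : 'M[R]_(1 + (1 + (m + m)), m) :=
  col_mx (const_mx 1) (col_mx (\row_i (v i 0 ^+ 2)) (col_mx (- 1%:M) 1%:M)).
Definition lp_bineq (m : nat) (gamma : R) (k : nat) : 'cV[R]_(1 + (1 + (m + m))) :=
  col_mx (k%:R)%:M (col_mx gamma%:M (col_mx 0 (const_mx 1))).
Definition lp_Aeq (r m : nat) (L : 'M[R]_(r, m)) (v : 'cV[R]_m) : 'M[R]_(r, m) :=
  \matrix_(j < r, i < m) (L j i * v i 0).

Definition frac (x : R) : bool := (x != 0) && (x != 1).
Definition utilde (m : nat) (ub : 'cV[R]_m) : 'cV[R]_m :=
  \col_i (if frac (ub i 0) then 1 else ub i 0).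
Definition vtilde (m : nat) (ub v : 'cV[R]_m) : 'cV[R]_m :=
  \col_i (if frac (ub i 0) then ub i 0 * v i 0 else v i 0).

End Defs.

From Pilot Require Import Defs.
From HB Require Import structures.
From mathcomp Require Import all_boot all_order all_algebra.
From mathcomp Require Import all_classical all_reals ereal topology normedtype sequences.
From mathcomp Require Import zify lra.
Import Order.TTheory GRing.Theory Num.Theory numFieldNormedType.Exports.
Set Implicit Arguments. Unset Strict Implicit. Unset Printing Implicit Defensive.
Local Open Scope ring_scope.

(* The equality constraints of the linear program force X D(ub) v* = X D(u* ) v*,
   so OPT is the optimal value p**_con(k).  A basic feasible solution ub has m
   linearly independent active constraints; besides the r equality rows and the
   two budget rows these can only be bounds u_i = 0 or u_i = 1, hence at most
   r + 2 coordinates of ub are fractional.  Rounding them up leaves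
   w = D(ub) v* unchanged, so w has at most k + r + 2 nonzero entries and
   |w|^2 <= sum_i ub_i (v*_i)^2 <= gamma: w is feasible for p*_con(k + r + 2).
   Finally rho(f) >= 0 because f** <= f.  The bounds hold for every basic
   feasible solution. *)

Section Vectors.
Variable R : realType.

Lemma ipE n (x y : 'cV[R]_n) : ip x y = \sum_i x i 0 * y i 0.
Proof. by rewrite /ip !mxE; apply: eq_bigr => i _; rewrite !mxE. Qed.

Lemma ipC n (x y : 'cV[R]_n) : ip x y = ip y x.
Proof. by rewrite !ipE; apply: eq_bigr => i _; rewrite mulrC. Qed.

Lemma mul_Dg_mxE m (u v : 'cV[R]_m) i j : (Dg u *m v) i j = u i 0 * v i j.
Proof. by rewrite /Dg mul_diag_mx !mxE. Qed.

Lemma l0E m (w : 'cV[R]_m) : l0 w = #|[set i : 'I_m | w i 0 != 0]|.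
Proof. by apply: eq_card => i; apply/idP/idP; rewrite inE /= ?in_setE ?inE. Qed.

Lemma sumr_indicator m (P : pred 'I_m) :
  \sum_i ((P i)%:R : R) = (#|[set i | P i]|)%:R.
Proof.
rewrite -sum1_card natr_sum [RHS]big_mkcond /=; apply: eq_bigr => i _.
by rewrite inE; case: (P i).
Qed.

Lemma l0_le_count_ones_frac m (u v : 'cV[R]_m) :
  (l0 (Dg u *m v) <= #|[set i | u i 0%R == 1%R]| + #|[set i | Defs.frac (u i 0%R)]|)%N.
Proof.
rewrite l0E; apply: leq_trans (leq_card_setU _ _); apply: subset_leq_card.
apply/fintype.subsetP => i; rewrite !inE mul_Dg_mxE mulf_eq0 negb_or /Defs.frac.
by case/andP=> ->; case: (u i 0 == 1).
Qed.

Lemma Dg_utilde_vtilde m (ub v : 'cV[R]_m) :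
  Dg (utilde ub) *m vtilde ub v = Dg ub *m v.
Proof.
apply/matrixP => i j; rewrite !mul_Dg_mxE !mxE ord1.
by case: ifP; rewrite ?mul1r.
Qed.

Lemma lp_Aeq_mul r m (L : 'M[R]_(r, m)) (v u : 'cV[R]_m) :
  lp_Aeq L v *m u = L *m (Dg u *m v).
Proof.
apply/matrixP => j l; rewrite !mxE; apply: eq_bigr => i _.
by rewrite mul_Dg_mxE !mxE ord1 -mulrA [v i 0 * _]mulrC.
Qed.

End Vectors.

Lemma submx_col_mxl (F : fieldType) m1 m2 n (A : 'M[F]_(m1, n)) (B : 'M_(m2, n)) :
  (A <= col_mx A B)%MS.
Proof. by rewrite -addsmxE addsmxSl. Qed.

Lemma submx_col_mxr (F : fieldType) m1 m2 n (A : 'M[F]_(m1, n)) (B : 'M_(m2, n)) :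
  (B <= col_mx A B)%MS.
Proof. by rewrite -addsmxE addsmxSr. Qed.

Lemma row1_sub_rowsub_enum (F : fieldType) m (N : {set 'I_m}) i : i \in N ->
  (row i (1%:M : 'M[F]_m) <= rowsub (enum_val (A := N)) 1%:M)%MS.
Proof.
by move=> Ni; rewrite -[i](enum_rankK_in Ni Ni) -row_rowsub row_sub.
Qed.

Section Basic_feasible_solutions.
Variables (R : realType) (m r : nat) (v : 'cV[R]_m) (gamma : R) (k : nat).
Variables (Ae : 'M[R]_(r, m)) (z : 'cV[R]_r).

Let Ai := lp_Aineq v.
Let bi := lp_bineq m gamma k.

Lemma lp_feas_relax_feas u : poly_feas Ai bi Ae z u -> relax_feas gamma k v u.
Proof.
move=> [ineq _]; rewrite /relax_feas ipE.
split; [move=> i; apply/andP; split | split].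
- have := ineq (rshift 1 (rshift 1 (lshift m i))).
  rewrite /Ai /bi /lp_Aineq /lp_bineq !mul_col_mx !col_mxEd !col_mxEu.
  by rewrite mulNmx mul1mx !mxE oppr_le0.
- have := ineq (rshift 1 (rshift 1 (rshift m i))).
  by rewrite /Ai /bi /lp_Aineq /lp_bineq !mul_col_mx !col_mxEd mul1mx !mxE.
- have := ineq (lshift _ ord0).
  rewrite /Ai /bi /lp_Aineq /lp_bineq mul_col_mx !col_mxEu !mxE eqxx mulr1n.
  by under eq_bigr => i _ do rewrite mxE mul1r.
- have := ineq (rshift 1 (lshift _ ord0)).
  rewrite /Ai /bi /lp_Aineq /lp_bineq !mul_col_mx !col_mxEd !col_mxEu !mxE eqxx mulr1n.
  move=> /(le_trans _); apply; apply: ler_sum => i _.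
  by rewrite mxE mul_Dg_mxE mulrCA [_ ^+ 2 * _]mulrC expr2.
Qed.

Lemma lp_active_rows_sub (u : 'cV[R]_m) :
  (\matrix_(j, i) (if (Ai *m u) j 0 == bi j 0 then Ai j i else 0)
    <= col_mx (col_mx (const_mx 1 : 'rV_m) (\row_i v i 0 ^+ 2))
              (rowsub (enum_val (A := [set i | ~~ Defs.frac (u i 0%R)])) 1%:M))%MS.
Proof.
set N := [set i | _]; apply/row_subP => j; set G := col_mx _ _.
have -> : row j (\matrix_(j, i) (if (Ai *m u) j 0 == bi j 0 then Ai j i else 0)) =
          if (Ai *m u) j 0 == bi j 0 then row j Ai else 0.
  by apply/rowP => i; rewrite !mxE; case: ifP; rewrite ?mxE.
case: ifP => [|_]; last exact: sub0mx.
have sub_top (B : 'M_(1, m)) :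
    (B <= col_mx (const_mx 1 : 'rV_m) (\row_i v i 0 ^+ 2))%MS -> (B <= G)%MS.
  by move=> H; apply: submx_trans H (submx_col_mxl _ _).
have sub_N i : i \in N -> (row i 1%:M <= G)%MS.
  by move=> Ni; apply: submx_trans (row1_sub_rowsub_enum _ Ni) (submx_col_mxr _ _).
rewrite /Ai /bi /lp_Aineq /lp_bineq.
case: (split_ordP j) => j0 -> active.
  by rewrite rowKu; apply/sub_top/(submx_trans _ (submx_col_mxl _ _))/row_sub.
move: active; case: (split_ordP j0) => j1 -> active.
  by rewrite rowKd rowKu; apply/sub_top/(submx_trans _ (submx_col_mxr _ _))/row_sub.
rewrite !mul_col_mx !col_mxEd !rowKd in active *.
move: active; case: (split_ordP j1) => i -> active.
  move: active; rewrite rowKu !col_mxEu mulNmx mul1mx !mxE oppr_eq0 => /eqP ui0.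
  by rewrite linearN eqmx_opp sub_N // inE /Defs.frac ui0 eqxx.
move: active; rewrite rowKd !col_mxEd mul1mx !mxE => /eqP ui1.
by rewrite sub_N // inE /Defs.frac ui1 eqxx andbF.
Qed.

Lemma bfs_card_frac (u : 'cV[R]_m) : is_bfs Ai bi Ae z u ->
  (#|[set i | Defs.frac (u i 0%R)]| <= r + 2)%N.
Proof.
move=> [_ rk_active].
set N := [set i | ~~ Defs.frac (u i 0%R)].
have cardN : (#|[set i | Defs.frac (u i 0%R)]| + #|N|)%N = m.
  have -> : N = ~: [set i | Defs.frac (u i 0%R)] by apply/setP => i; rewrite !inE.
  by rewrite cardsC card_ord.
have active_sub :
    (col_mx (\matrix_(j, i) (if (Ai *m u) j 0 == bi j 0 then Ai j i else 0)) Ae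
     <= col_mx (col_mx (col_mx (const_mx 1 : 'rV_m) (\row_i v i 0 ^+ 2))
                       (rowsub (enum_val (A := N)) 1%:M)) Ae)%MS.
  by rewrite col_mx_sub submx_col_mxr (submx_trans (lp_active_rows_sub u)) ?submx_col_mxl.
have := leq_trans (mxrankS active_sub) (rank_leq_row _).
rewrite rk_active => rank_bound.
(* enum_val is indexed by 'I_#|[eta N]|, which is only convertibly #|N| *)
have {rank_bound} : (m <= 2 + #|N| + r)%N by exact: rank_bound.
lia.
Qed.

End Basic_feasible_solutions.

Section Rounding.
Variable R : realType.

Lemma ip_Dg_mul_le m (u v : 'cV[R]_m) : (forall i, 0 <= u i 0 <= 1) ->
  ip (Dg u *m v) (Dg u *m v) <= ip v (Dg u *m v).
Proof.
move=> box; rewrite !ipE; apply: ler_sum => i _; rewrite !mul_Dg_mxE.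
have /andP [u0 u1] := box i.
have u1' : 0 <= 1 - u i 0 by rewrite subr_ge0.
have := mulr_ge0 (sqr_ge0 (v i 0)) (mulr_ge0 u0 u1').
nra.
Qed.

Lemma card_ones_le m (u : 'cV[R]_m) (k : nat) : (forall i, 0 <= u i 0 <= 1) ->
  \sum_i u i 0 <= k%:R -> (#|[set i | u i 0%R == 1%R]| <= k)%N.
Proof.
move=> box sum_le; rewrite -(ler_nat R) -sumr_indicator; apply: le_trans sum_le.
by apply: ler_sum => i _; case: eqP => [->|_] //; case/andP: (box i).
Qed.

Lemma relax_feas_round m (gamma : R) (k s : nat) (v u : 'cV[R]_m) :
  relax_feas gamma k v u -> (#|[set i | Defs.frac (u i 0%R)]| <= s)%N ->
  (l0 (Dg u *m v) <= k + s)%N /\ ip (Dg u *m v) (Dg u *m v) <= gamma.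
Proof.
move=> [box [sum_le quad_le]] frac_le; split.
  apply: leq_trans (l0_le_count_ones_frac u v) _.
  exact: leq_add (card_ones_le box sum_le) frac_le.
exact: le_trans (ip_Dg_mul_le v box) quad_le.
Qed.

End Rounding.

Section Optimal_values.
Local Open Scope classical_set_scope.
Variables (R : realType) (n m : nat) (f : 'cV[R]_n -> \bar R) (X : 'M[R]_(n, m)).
Variable gamma : R.

Lemma fbiconj_le x : (fbiconj f x <= f x)%E.
Proof.
apply: ge_ereal_sup => _ [y _ <-].
have conj_ge : ((ip x y)%:E - f x <= fconj f y)%E by apply: ereal_sup_ubound; exists x.
case: (f x) conj_ge => [a| |] conj_ge; last 2 first.
- exact: leey.
- by move: conj_ge; rewrite /= leye_eq => /eqP ->; rewrite addeNy.
case: (fconj f y) conj_ge => [b| |] conj_ge.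
- by move: conj_ge; rewrite -!EFinB !lee_fin ipC; lra.
- by rewrite addeNy leNye.
- by rewrite leeNy_eq in conj_ge.
Qed.

Lemma pcon_sub_rho_le (q : nat) (w : 'cV[R]_m) :
  (l0 w <= q)%N -> ip w w <= gamma ->
  (pcon f X gamma q - rho f X <= f (X *m w))%E.
Proof.
move=> l0w ipw; have pcon_le : (pcon f X gamma q <= f (X *m w))%E.
  by apply: ereal_inf_lbound; exists w.
case E : (f (X *m w)) pcon_le => [a| |] pcon_le; last 2 first.
- exact: leey.
- by move: pcon_le; rewrite leeNy_eq => /eqP ->; rewrite addNye.
have rho_ge0 : (0 <= rho f X)%E.
  apply: le_trans (ereal_sup_ubound _) => /=; last by exists w.
  by rewrite E sube_ge0 ?orbT // -E fbiconj_le.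
by apply: le_trans pcon_le; rewrite -[leRHS]sube0 leeB.
Qed.

Lemma pcon2_le_pcon (k : nat) : (pcon2 f X gamma k <= pcon f X gamma k)%E.
Proof.
apply: ereal_inf_le_tmp => _ [w [l0w ipw] <-].
pose supp : 'cV[R]_m := \col_i (w i 0 != 0)%:R.
have supp_w : Dg supp *m w = w.
  apply/matrixP => i j; rewrite mul_Dg_mxE mxE ord1.
  by case: eqP => [->|]; rewrite ?mulr0 ?mul1r.
exists (w, supp); last by rewrite /= supp_w.
split; [|split] => /=.
- by move=> i; rewrite mxE; case: (_ != _); rewrite ?lexx ?ler01.
- by under eq_bigr => i _ do rewrite mxE; rewrite sumr_indicator ler_nat -l0E.
- by rewrite supp_w.
Qed.

Lemma pcon2_attained (k : nat) (v u : 'cV[R]_m) : relax_feas gamma k v u ->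
  (forall v' u', relax_feas gamma k v' u' ->
     (f (X *m (Dg u *m v)) <= f (X *m (Dg u' *m v')))%E) ->
  pcon2 f X gamma k = f (X *m (Dg u *m v)).
Proof.
move=> feas opt; apply/eqP; rewrite eq_le; apply/andP; split.
  by apply: ereal_inf_lbound; exists (v, u).
by apply: le_ereal_inf_tmp => _ [[v' u'] feas' <-]; exact: opt.
Qed.

End Optimal_values.

Theorem corollary4p1 (R : realType) (n m r : nat) (f : 'cV[R]_n -> \bar R)
  (X : 'M[R]_(n, m)) (U : 'M[R]_(n, r)) (sigma : 'rV[R]_r) (V : 'M[R]_(m, r))
  (gamma : R) (k : nat) (vs us : 'cV[R]_m) (c ub : 'cV[R]_m) :
  ext_closed f -> ext_convex f ->
  \rank X = r ->
  U^T *m U = 1%:M -> V^T *m V = 1%:M -> (forall j, 0 < sigma 0 j) ->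
  X = U *m diag_mx sigma *m V^T ->
  0 < gamma ->
  relax_feas gamma k vs us ->
  (forall v u, relax_feas gamma k v u ->
     (f (X *m (Dg us *m vs)) <= f (X *m (Dg u *m v)))%E) ->
  let L := diag_mx sigma *m V^T in
  let zs := L *m (Dg us *m vs) in
  let Ai := lp_Aineq vs in
  let bi := lp_bineq m gamma k in
  let Ae := lp_Aeq L vs in
  is_bfs Ai bi Ae zs ub ->
  (forall u, poly_feas Ai bi Ae zs u -> ip c ub <= ip c u) ->
  let w := Dg (utilde ub) *m vtilde ub vs in
  let OPT := f (X *m w) in
  (pcon f X gamma (k + r + 2) - rho f X <= OPT)%E /\
  (OPT <= pcon2 f X gamma k)%E /\
  (pcon2 f X gamma k <= pcon f X gamma k)%E.
Proof.
move=> _ _ _ _ _ _ X_svd _ feas_s opt_s L zs Ai bi Ae bfs _ w OPT.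
have [ub_feas _] := bfs; have [_ ub_eq] := ub_feas.
have wE : w = Dg ub *m vs by rewrite /w Dg_utilde_vtilde.
have OPTE : OPT = f (X *m (Dg us *m vs)).
  have XL : X = U *m L by rewrite X_svd mulmxA.
  by rewrite /OPT XL -mulmxA wE -lp_Aeq_mul -/Ae ub_eq /zs mulmxA.
have [l0w ipw] : (l0 w <= k + r + 2)%N /\ ip w w <= gamma.
  rewrite wE -addnA.
  exact: relax_feas_round (lp_feas_relax_feas ub_feas) (bfs_card_frac bfs).
split; [exact: pcon_sub_rho_le | split; last exact: pcon2_le_pcon].
by rewrite (pcon2_attained feas_s opt_s) OPTE.
Qed.
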